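(* Let $(Q,\cdot)$ be a quasigroup satisfying $x(y(zz))=(x(yz))z$ for all $x,y,z\in Q$ (an LG1-quasigroup). Then $Q$ satisfies each of the following identities for all $x,y,z\in Q$: (1) $x(y(zy))=(x(yz))y$ (LG3); (2) $x(y(yz))=(x(yy))z$ (LC4); (3) $x(y(xz))=(x(yx))z$ (left Bol).
   Context: A quasigroup is a set $Q$ with a binary operation $\cdot$ (written as juxtaposition) such that for all $a,b\in Q$ each of the equations $ax=b$ and $ya=b$ has a unique solution in $Q$. *)

Definition is_quasigroup {Q : Type} (mul : Q -> Q -> Q) : Prop :=
  (forall a b : Q, exists! x : Q, mul a x = b) /\
  (forall a b : Q, exists! y : Q, mul y a = b).

(* An LG1-quasigroup has a right unit e, and a b = a ∘ σ b, where
   a ∘ b := a (e\b) is a group operation and σ b := e b.  Associativity of ∘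
   comes from LG1 in the form (x u) z = x ((u/z)(z z)): right translations are
   closed under composition.  Rewritten through ∘, LG1 forces σ to be an
   involutive automorphism of (Q, ∘), and then both x(y(wz)) and (x(yw))z equal
   x ∘ σ y ∘ w ∘ σ z, which contains all three identities. *)

From Stdlib Require Import IndefiniteDescription.

Section Quasigroup.

Variables (Q : Type) (mul : Q -> Q -> Q).
Hypothesis hQ : is_quasigroup mul.

Lemma mul_cancel_l a x y : mul a x = mul a y -> x = y.
Proof.
  intros H. destruct (proj1 hQ a (mul a x)) as [u [_ Hu]].
  rewrite <- (Hu x eq_refl), <- (Hu y (eq_sym H)). reflexivity.
Qed.

Lemma mul_cancel_r a x y : mul x a = mul y a -> x = y.
Proof.
  intros H. destruct (proj2 hQ a (mul x a)) as [u [_ Hu]].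
  rewrite <- (Hu x eq_refl), <- (Hu y (eq_sym H)). reflexivity.
Qed.

Definition ldiv (a b : Q) : Q :=
  proj1_sig (constructive_indefinite_description _ (proj1 hQ a b)).

Definition rdiv (b a : Q) : Q :=
  proj1_sig (constructive_indefinite_description _ (proj2 hQ a b)).

Lemma mul_ldiv a b : mul a (ldiv a b) = b.
Proof. exact (proj1 (proj2_sig (constructive_indefinite_description _ (proj1 hQ a b)))). Qed.

Lemma ldiv_mul a b : ldiv a (mul a b) = b.
Proof. apply (mul_cancel_l a). apply mul_ldiv. Qed.

Lemma mul_rdiv b a : mul (rdiv b a) a = b.
Proof. exact (proj1 (proj2_sig (constructive_indefinite_description _ (proj2 hQ a b)))). Qed.

Section LG1.

Hypothesis hLG1 : forall x y z, mul x (mul y (mul z z)) = mul (mul x (mul y z)) z.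

Lemma mul_mul_r x u z : mul (mul x u) z = mul x (mul (rdiv u z) (mul z z)).
Proof. rewrite hLG1, mul_rdiv. reflexivity. Qed.

Definition runit (a : Q) : Q := mul (rdiv a (mul a a)) a.

Lemma mul_runit a w : mul w (runit a) = w.
Proof.
  apply (mul_cancel_r a). unfold runit.
  rewrite <- hLG1, mul_rdiv. reflexivity.
Qed.

Section GroupIsotope.

Variable e : Q.
Hypothesis mul_e_r : forall w, mul w e = w.

Definition gmul (a b : Q) : Q := mul a (ldiv e b).

Definition sigma (b : Q) : Q := mul e b.

Definition ginv (a : Q) : Q := rdiv e (ldiv e a).

Lemma mul_gmul a b : mul a b = gmul a (sigma b).
Proof. unfold gmul, sigma. rewrite ldiv_mul. reflexivity. Qed.

Lemma sigma_1 : sigma e = e.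
Proof. apply mul_e_r. Qed.

Lemma sigma_inj a b : sigma a = sigma b -> a = b.
Proof. apply mul_cancel_l. Qed.

Lemma gmul_1l b : gmul e b = b.
Proof. apply mul_ldiv. Qed.

Lemma gmul_1r a : gmul a e = a.
Proof.
  unfold gmul. rewrite <- sigma_1 at 2. unfold sigma.
  rewrite ldiv_mul. apply mul_e_r.
Qed.

Lemma gmulA x u w : gmul x (gmul u w) = gmul (gmul x u) w.
Proof.
  unfold gmul. rewrite mul_mul_r. f_equal.
  apply (mul_cancel_l e). rewrite mul_ldiv, <- mul_mul_r, mul_ldiv.
  reflexivity.
Qed.

Lemma gmul_cancel_l x a b : gmul x a = gmul x b -> a = b.
Proof.
  unfold gmul. intros H. apply mul_cancel_l in H.
  rewrite <- (mul_ldiv e a), <- (mul_ldiv e b), H. reflexivity.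
Qed.

Lemma gmul_cancel_r x a b : gmul a x = gmul b x -> a = b.
Proof. apply mul_cancel_r. Qed.

Lemma gmulVg a : gmul (ginv a) a = e.
Proof. apply mul_rdiv. Qed.

Lemma gmulgV a : gmul a (ginv a) = e.
Proof.
  apply (gmul_cancel_r a).
  rewrite <- gmulA, gmulVg, gmul_1r, gmul_1l. reflexivity.
Qed.

Lemma sigma_LG1 y z :
  sigma (gmul y (sigma (gmul z (sigma z)))) = gmul (sigma (gmul y (sigma z))) (sigma z).
Proof. rewrite <- !mul_gmul. apply hLG1. Qed.

Lemma sigma_gmul_sigma z : sigma (gmul z (sigma z)) = gmul (sigma z) z.
Proof.
  pose proof (sigma_LG1 (ginv (sigma z)) z) as H.
  rewrite gmulVg, sigma_1, gmul_1l in H. apply sigma_inj in H.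
  rewrite <- H at 4. rewrite gmulA, gmulgV, gmul_1l. reflexivity.
Qed.

Lemma sigma_gmul v z : sigma (gmul v z) = gmul (sigma v) (sigma z).
Proof.
  pose proof (sigma_LG1 (gmul v (ginv (sigma z))) z) as H.
  rewrite <- (gmulA v _ (sigma z)), gmulVg, gmul_1r, sigma_gmul_sigma in H.
  rewrite <- (gmulA v), (gmulA _ (sigma z)), gmulVg, gmul_1l in H.
  exact H.
Qed.

Lemma sigmaK z : sigma (sigma z) = z.
Proof.
  apply (gmul_cancel_l (sigma z)).
  rewrite <- sigma_gmul, sigma_gmul_sigma. reflexivity.
Qed.

Lemma mul_nested_assoc_unit x y w z :
  mul x (mul y (mul w z)) = mul (mul x (mul y w)) z.
Proof. rewrite !mul_gmul, !sigma_gmul, !sigmaK, !gmulA. reflexivity. Qed.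

End GroupIsotope.

Lemma mul_nested_assoc x y w z :
  mul x (mul y (mul w z)) = mul (mul x (mul y w)) z.
Proof. exact (mul_nested_assoc_unit (runit x) (mul_runit x) x y w z). Qed.

End LG1.

End Quasigroup.

Theorem mainTheorem7 (Q : Type) (mul : Q -> Q -> Q)
  (hQ : is_quasigroup mul)
  (hLG1 : forall x y z : Q, mul x (mul y (mul z z)) = mul (mul x (mul y z)) z) :
  (forall x y z : Q, mul x (mul y (mul z y)) = mul (mul x (mul y z)) y) /\
  (forall x y z : Q, mul x (mul y (mul y z)) = mul (mul x (mul y y)) z) /\
  (forall x y z : Q, mul x (mul y (mul x z)) = mul (mul x (mul y x)) z).
Proof.
  split; [|split]; intros x y z; apply (mul_nested_assoc Q mul hQ hLG1).
Qed.
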